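(* Let $\mathcal{T}$ be a set of finite simplicial complexes, and let $\Lambda$ be a real-valued function on $\mathcal{T}$. Suppose there are real numbers $b_{-1}, b_0, b_1, \ldots$ such that $\Lambda(K) = \sum_{i=-1}^{\dim K} b_i f_i(K)$ for all $K \in \mathcal{T}$. \begin{enumerate} \item If all the simplicial complexes in $\mathcal{T}$ have the same non-zero Euler characteristic, then $\Lambda$ is combinatorially locally determined. \item If $b_{-1} = 0$, then $\Lambda$ is combinatorially locally determined. \item If $b_{-1} \neq 0$, and if $\mathcal{T}$ contains all flag $d$-spheres for some odd integer $d \geq 3$, then $\Lambda$ is not combinatorially locally determined. \end{enumerate}
   Context: All simplicial complexes are finite. For a simplicial complex $K$, $f_i(K)$ denotes the number of $i$-simplices of $K$ for $i \in \{0,1,\ldots,\dim K\}$, with the convention $f_{-1}(K) = 1$ and $f_i(K) = 0$ for all other integers $i$. $\operatorname{Vert}(K)$ is the set of vertices of $K$, and $\operatorname{lk}(v,K)$ is the link of the vertex $v$ in $K$. For a set $\mathcal{T}$ of simplicial complexes let $\operatorname{Links}(\mathcal{T}) = \{\operatorname{lk}(v,K) \mid K \in \mathcal{T},\ v \in \operatorname{Vert}(K)\}$. A real-valued function $\Lambda$ on $\mathcal{T}$ is combinatorially locally determined if there is a real-valued function $h$ on $\operatorname{Links}(\mathcal{T})$ that is invariant under combinatorial equivalence (isomorphic complexes get the same value) such that $\Lambda(K) = \sum_{v \in \operatorname{Vert}(K)} h(\operatorname{lk}(v,K))$ for every $K \in \mathcal{T}$. A simplicial complex $K$ is a flag complex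 if for every subset $T \subseteq \operatorname{Vert}(K)$ whose vertices are pairwise joined by edges, $T$ is the vertex set of a face of $K$. A flag $d$-sphere is a flag simplicial complex whose underlying space is homeomorphic to the $d$-sphere. *)

From HB Require Import structures.
From mathcomp Require Import all_boot all_order all_algebra.
From mathcomp Require all_classical all_reals all_analysis.

Set Implicit Arguments.
Unset Strict Implicit.
Unset Printing Implicit Defensive.

Import Order.TTheory GRing.Theory Num.Theory.

Local Open Scope ring_scope.

(* A finite (abstract) simplicial complex: a downward closed family of finite
   subsets of a finite vertex universe 'I_n, containing the empty face (so
   that f_{-1} = 1). *)
Record complex := Complex {
  cn : nat;
  faces : {set {set 'I_cn}};
  faces_set0 : set0 \in faces;
  faces_closed : [forall s in faces, forall t : {set 'I_cn},
                    (t \subset s) ==> (t \in faces)] }.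

Definition Vert (K : complex) : {set 'I_(cn K)} :=
  [set v | [set v] \in faces K].

(* f_i(K) for an integer i: number of faces of cardinality i+1.
   Gives f_{-1} = 1 and f_i = 0 for i < -1 or i > dim K. *)
Definition fvec (i : int) (K : complex) : nat :=
  #|[set s in faces K | (#|s|%:Z == i + 1)%R]|.

Definition dimS (K : complex) : nat := \max_(s in faces K) #|s|.
Definition dim (K : complex) : int := (dimS K)%:Z - 1.

Definition euler (K : complex) : int :=
  \sum_(k < dimS K) (-1) ^+ k * (fvec k%:Z K)%:Z.

Definition fsum (R : numDomainType) (b : int -> R) (K : complex) : R :=
  \sum_(k < (dimS K).+1) b (k%:Z - 1) * (fvec (k%:Z - 1) K)%:R.

(* Link of a vertex v (for v a vertex the extra empty face is already there). *)
Definition link_faces (K : complex) (v : 'I_(cn K)) : {set {set 'I_(cn K)}} :=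
  [set s in faces K | (v \notin s) && ((v |: s) \in faces K)] :|: [set set0].

Arguments link_faces : clear implicits.

Lemma link_set0 (K : complex) v : set0 \in link_faces K v.
Proof. by rewrite /link_faces in_setU in_set1 eqxx orbT. Qed.

Arguments link_set0 : clear implicits.

Lemma link_closed (K : complex) v :
  [forall s in link_faces K v, forall t : {set 'I_(cn K)},
     (t \subset s) ==> (t \in link_faces K v)].
Proof.
apply/forall_inP => s; rewrite /link_faces in_setU in_set1 => /orP [|/eqP ->].
- rewrite inE => /andP [sK /andP [vs vsK]]; apply/forallP => t; apply/implyP => ts.
  have cl := faces_closed K.
  rewrite in_setU; apply/orP; left; rewrite inE.
  have tK : t \in faces K.
    by move/forall_inP: cl => /(_ _ sK) /forallP /(_ t) /implyP; apply.
  rewrite tK /=; apply/andP; split.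
    by apply: contra vs; apply: (subsetP ts).
  move/forall_inP: cl => /(_ _ vsK) /forallP /(_ (v |: t)) /implyP; apply.
  by apply: setUS.
- apply/forallP => t; apply/implyP; rewrite subset0 => /eqP ->.
  exact: link_set0.
Qed.

Arguments link_closed : clear implicits.

Definition link (K : complex) (v : 'I_(cn K)) : complex :=
  @Complex (cn K) (link_faces K v) (link_set0 K v) (link_closed K v).

Arguments link_faces : clear implicits.
Arguments link : clear implicits.

Definition comb_equiv (K L : complex) : Prop :=
  exists (f : 'I_(cn K) -> 'I_(cn L)) (g : 'I_(cn L) -> 'I_(cn K)),
    [/\ (forall s, s \in faces K -> f @: s \in faces L),
        (forall t, t \in faces L -> g @: t \in faces K),
        (forall v, v \in Vert K -> g (f v) = v) &
        (forall w, w \in Vert L -> f (g w) = w)].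

Definition Links (T : complex -> Prop) : complex -> Prop :=
  fun L => exists (K : complex) (v : 'I_(cn K)),
    [/\ T K, v \in Vert K & L = link K v].

Definition comb_locally_determined (R : numDomainType)
    (T : complex -> Prop) (Lam : complex -> R) : Prop :=
  exists h : complex -> R,
    (forall L1 L2, Links T L1 -> Links T L2 -> comb_equiv L1 L2 -> h L1 = h L2) /\
    (forall K, T K -> Lam K = \sum_(v in Vert K) h (link K v)).

Definition flag (K : complex) : Prop :=
  forall S : {set 'I_(cn K)}, S \subset Vert K ->
    (forall u w, u \in S -> w \in S -> u != w -> [set u; w] \in faces K) ->
    S \in faces K.

From mathcomp Require Import all_classical all_reals all_analysis.
Import numFieldNormedType.Exports.
Local Open Scope classical_set_scope.
Local Open Scope ring_scope.

Definition realization (R : realType) (K : complex) : set 'rV[R]_(cn K) :=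
  [set x | (forall i, 0 <= x ord0 i) /\ \sum_i x ord0 i = 1 /\
           finset (fun i => x ord0 i != 0) \in faces K].

Definition sphere (R : realType) (d : nat) : set 'rV[R]_d.+1 :=
  [set y | \sum_i y ord0 i ^+ 2 = 1].

Arguments realization : clear implicits.
Arguments sphere : clear implicits.

Definition homeomorphic (R : realType) (m n : nat)
    (A : set 'rV[R]_m) (B : set 'rV[R]_n) : Prop :=
  exists (f : 'rV[R]_m -> 'rV[R]_n) (g : 'rV[R]_n -> 'rV[R]_m),
    [/\ (forall x, A x -> B (f x)), (forall y, B y -> A (g y)),
        (forall x, A x -> g (f x) = x) & (forall y, B y -> f (g y) = y)] /\
    ({within A, continuous f} /\ {within B, continuous g}).

Definition flag_sphere (R : realType) (d : nat) (K : complex) : Prop :=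
  flag K /\ homeomorphic (realization R K) (sphere R d).

From HB Require Import structures.
From mathcomp Require Import all_boot all_order all_algebra.
From mathcomp Require Import all_classical all_reals all_analysis.
From mathcomp Require Import fintype finset ring lra.
Import Order.TTheory GRing.Theory Num.Theory.
Import numFieldNormedType.Exports.
Local Open Scope ring_scope.
Set Implicit Arguments.
Unset Strict Implicit.
Unset Printing Implicit Defensive.

(* Counting each face with k.+1 vertices once in the link of each of its
   vertices writes sum_(i >= 0) b_i f_i(K) as a sum over the vertices of a
   function of their links; the constant b_(-1) is absorbed, when the Euler
   characteristic is a nonzero constant c, as b_(-1)/c times the same local
   formula for the Euler characteristic.

   Conversely, if Lam were locally determined, so would be the constant
   b_(-1) on T.  For 2k = d + 1 and s : 'I_k -> bool, let K_s be the join of k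
   polygons, the i-th being a pentagon if s i and a square otherwise: a flag
   d-sphere, mapped onto the unit sphere by sending each polygon radially onto
   the unit circle of its own coordinate plane.  The link of a vertex of block
   i is two points joined with the other blocks, so it depends only on s off
   i.  Weighting K_s by prod_i (if s i then -4 else 5), the weights add up to
   1, while the weighted sums of the local function cancel block by block
   since 5 * (-4) + 4 * 5 = 0; hence b_(-1) = 0. *)

(** * Face numbers and vertex links *)

Definition nfaces (k : nat) (K : complex) : nat :=
  #|[set s in faces K | #|s| == k]|.

Lemma fvec_nfaces (k : nat) K : fvec (k%:Z - 1) K = nfaces k K.
Proof. by apply: eq_card => s; rewrite !inE subrK eqz_nat. Qed.

Lemma faces_sub (K : complex) (s t : {set 'I_(cn K)}) :
  s \in faces K -> t \subset s -> t \in faces K.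
Proof.
by move=> sK ts; move/forall_inP: (faces_closed K) => /(_ _ sK) /forallP /(_ t) /implyP; apply.
Qed.

Lemma mem_face_Vert (K : complex) (s : {set 'I_(cn K)}) u :
  s \in faces K -> u \in s -> u \in Vert K.
Proof. by move=> sK us; rewrite inE; apply: (faces_sub sK); rewrite sub1set. Qed.

Lemma nfaces0 (K : complex) : nfaces 0 K = 1%N.
Proof.
rewrite /nfaces (_ : [set s in faces K | #|s| == 0%N] = [set set0]) ?cards1 //.
by apply/setP => s; rewrite !inE cards_eq0; case: eqP => [->|]; rewrite ?faces_set0 ?andbF.
Qed.

Lemma nfaces_gt_dimS (K : complex) k : (dimS K < k)%N -> nfaces k K = 0%N.
Proof.
move=> lt; apply/eqP; rewrite cards_eq0; apply/eqP/setP => s; rewrite !inE.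
apply/negbTE; apply/negP => /andP [sK /eqP sk].
by have := @leq_bigmax_cond _ (mem (faces K)) (fun s => #|s|) _ sK; rewrite -/(dimS K) sk leqNgt lt.
Qed.

Lemma dimS_le_cn (K : complex) : (dimS K <= cn K)%N.
Proof. by apply/bigmax_leqP => s _; rewrite -[X in (_ <= X)%N]card_ord max_card. Qed.

Lemma nfaces_gt_cn (K : complex) k : (cn K < k)%N -> nfaces k K = 0%N.
Proof. by move=> lt; rewrite nfaces_gt_dimS // (leq_ltn_trans (dimS_le_cn K)). Qed.

Lemma nfaces_link (K : complex) v k : v \in Vert K ->
  nfaces k (link K v) = #|[set t in faces K | (#|t| == k.+1) && (v \in t)]|.
Proof.
move=> vV; have vnotin s :
    [&& s \in faces K, v \notin s & v |: s \in faces K] || (s == set0) -> v \notin s.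
  by case/orP => [/and3P []|/eqP ->] //; rewrite inE.
rewrite /nfaces -(@card_in_imset _ _ (fun s => v |: s)); last first.
  move=> s1 s2; rewrite !inE => /andP [/vnotin n1 _] /andP [/vnotin n2 _] e.
  by rewrite -(setU1K n1) -(setU1K n2) e.
apply: eq_card => t; rewrite !inE; apply/imsetP/idP.
  case=> s; rewrite !inE => /andP [+ /eqP sk] ->; case/orP => [/and3P [sK vs vsK]|/eqP s0].
    by rewrite vsK setU11 cardsU1 vs sk add1n eqxx.
  by move: vV sk; rewrite s0 inE setU0 cards1 cards0 set11 => -> <-.
case/and3P => tK tk vt; exists (t :\ v); last by rewrite setD1K.
rewrite !inE eqxx setD1K // tK (faces_sub tK) ?subD1set //=.
by have := cardsD1 v t; rewrite vt (eqP tk) add1n => -[<-].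
Qed.

Lemma sum_nfaces_link (K : complex) k :
  (\sum_(v in Vert K) nfaces k (link K v))%N = (k.+1 * nfaces k.+1 K)%N.
Proof.
under eq_bigr => v vV do rewrite nfaces_link //.
rewrite /nfaces (eq_bigr (fun v =>
    \sum_(t in [set t in faces K | #|t| == k.+1]) nat_of_bool (v \in t))%N); last first.
  move=> v _; rewrite -sum1_card [LHS]big_mkcond [RHS]big_mkcond /=.
  by apply: eq_bigr => t _; rewrite !inE; case: (t \in faces K); case: (_ == _); case: (v \in t).
rewrite exchange_big /= -sum1_card big_distrr /= muln1.
apply: eq_bigr => t; rewrite inE => /andP [tK /eqP <-].
rewrite -sum1_card big_mkcond [RHS]big_mkcond /=; apply: eq_bigr => v _.
by case vt: (v \in t); rewrite ?(mem_face_Vert tK vt) ?if_same.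
Qed.

Lemma imset_can_face (L1 L2 : complex) (f : 'I_(cn L1) -> 'I_(cn L2))
    (g : 'I_(cn L2) -> 'I_(cn L1)) (s : {set 'I_(cn L1)}) :
  s \in faces L1 -> {in Vert L1, cancel f g} -> g @: (f @: s) = s.
Proof.
move=> sK gf; rewrite -imset_comp -[RHS]imset_id; apply: eq_in_imset => x xs.
by rewrite /= gf // (mem_face_Vert sK xs).
Qed.

Lemma nfaces_le (L1 L2 : complex) (f : 'I_(cn L1) -> 'I_(cn L2))
    (g : 'I_(cn L2) -> 'I_(cn L1)) k :
  (forall s, s \in faces L1 -> f @: s \in faces L2) -> {in Vert L1, cancel f g} ->
  (nfaces k L1 <= nfaces k L2)%N.
Proof.
move=> fF gf; rewrite /nfaces -(@card_in_imset _ _ (fun s : {set _} => f @: s)); last first.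
  move=> s1 s2; rewrite !inE => /andP [s1K _] /andP [s2K _] e.
  by rewrite -(imset_can_face s1K gf) -(imset_can_face s2K gf) e.
apply: subset_leq_card; apply/subsetP => _ /imsetP [s + ->]; rewrite !inE => /andP [sK sk].
rewrite fF // card_in_imset // => x y xs ys e.
by rewrite -(gf _ (mem_face_Vert sK xs)) -(gf _ (mem_face_Vert sK ys)) e.
Qed.

Lemma nfaces_comb_equiv (L1 L2 : complex) k :
  comb_equiv L1 L2 -> nfaces k L1 = nfaces k L2.
Proof.
case=> f [g [fF gF gf fg]]; apply/eqP.
by rewrite eqn_leq (nfaces_le k fF gf) (nfaces_le k gF fg).
Qed.

Lemma big_ord_widen0 (V : nmodType) (F : nat -> V) m n :
  (forall k, (m <= k)%N -> F k = 0) -> (m <= n)%N ->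
  \sum_(k < m) F k = \sum_(k < n) F k.
Proof.
move=> F0 mn; rewrite (big_ord_widen n F mn) big_mkcond /=.
by apply: eq_bigr => i _; case: ifP => // /negbT; rewrite -leqNgt => /F0.
Qed.

Section LinkWeight.
Variable R : numFieldType.
Implicit Types (F : nat -> R) (K L : complex).

(* A face with k vertices of a link is a face with k.+1 vertices of the complex,
   shared by the links of these k.+1 vertices: hence the weight 1/(k.+1). *)
Definition link_weight F L : R :=
  \sum_(k < (cn L).+1) F k * (nfaces k L)%:R / (k.+1)%:R.

Lemma link_weight_widen F L N : ((cn L).+1 <= N)%N ->
  link_weight F L = \sum_(k < N) F k * (nfaces k L)%:R / (k.+1)%:R.
Proof.
move=> le; apply: (@big_ord_widen0 _ (fun k => F k * (nfaces k L)%:R / (k.+1)%:R)) => // k lk.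
by rewrite nfaces_gt_cn // mulr0 mul0r.
Qed.

Lemma link_weight_comb_equiv F L1 L2 :
  comb_equiv L1 L2 -> link_weight F L1 = link_weight F L2.
Proof.
move=> e; rewrite (@link_weight_widen F L1 (cn L1 + cn L2).+1) ?ltnS ?leq_addr //.
rewrite (@link_weight_widen F L2 (cn L1 + cn L2).+1) ?ltnS ?leq_addl //.
by apply: eq_bigr => k _; rewrite (nfaces_comb_equiv k e).
Qed.

Lemma sum_link_weight F K :
  \sum_(v in Vert K) link_weight F (link K v) =
  \sum_(k < (cn K).+1) F k * (nfaces k.+1 K)%:R.
Proof.
rewrite /link_weight /= exchange_big /=; apply: eq_bigr => k _.
rewrite -big_distrl -big_distrr /= -natr_sum sum_nfaces_link natrM.
by rewrite mulrCA mulrC mulKf ?pnatr_eq0.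
Qed.

Lemma sum_nfacesS_widen F K :
  \sum_(k < dimS K) F k * (nfaces k.+1 K)%:R =
  \sum_(k < (cn K).+1) F k * (nfaces k.+1 K)%:R.
Proof.
apply: (@big_ord_widen0 _ (fun k => F k * (nfaces k.+1 K)%:R)) => [k lk|].
  by rewrite nfaces_gt_dimS ?mulr0.
exact/leqW/dimS_le_cn.
Qed.

Lemma fsum_link_weight (b : int -> R) K :
  fsum b K = b (-1) + \sum_(v in Vert K) link_weight (fun k => b k) (link K v).
Proof.
rewrite sum_link_weight -(sum_nfacesS_widen (fun k => b k)).
rewrite /fsum big_ord_recl /= (fvec_nfaces 0) nfaces0 mulr1; congr (_ + _); apply: eq_bigr => i _.
by rewrite /bump /= add1n -fvec_nfaces -addn1 PoszD addrK.
Qed.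

Lemma euler_link_weight K :
  (euler K)%:~R = \sum_(v in Vert K) link_weight (fun k => (-1) ^+ k) (link K v).
Proof.
rewrite sum_link_weight -(sum_nfacesS_widen (fun k => (-1) ^+ k)) /euler rmorph_sum.
apply: eq_bigr => i _.
by rewrite rmorphM /= rmorphXn rmorphN1 -fvec_nfaces -addn1 PoszD addrK.
Qed.

End LinkWeight.

Lemma comb_locally_determined_of_euler_const (R : numFieldType)
    (T : complex -> Prop) (Lam : complex -> R) (b : int -> R) (c : int) :
  (forall K, T K -> Lam K = fsum b K) -> c != 0 -> (forall K, T K -> euler K = c) ->
  comb_locally_determined T Lam.
Proof.
move=> HL c0 Hc.
exists (fun L => b (-1) / c%:~R * link_weight (fun k => (-1) ^+ k) L
                 + link_weight (fun k => b k) L); split.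
  by move=> L1 L2 _ _ e; rewrite !(link_weight_comb_equiv _ e).
move=> K TK; rewrite HL // fsum_link_weight big_split /= -big_distrr /=.
by rewrite -euler_link_weight Hc // divfK // intr_eq0.
Qed.

Lemma comb_locally_determined_of_fsum_bN1_eq0 (R : numFieldType)
    (T : complex -> Prop) (Lam : complex -> R) (b : int -> R) :
  (forall K, T K -> Lam K = fsum b K) -> b (-1) = 0 ->
  comb_locally_determined T Lam.
Proof.
move=> HL b0; exists (link_weight (fun k => b k)); split.
  by move=> L1 L2 _ _ e; rewrite (link_weight_comb_equiv _ e).
by move=> K TK; rewrite HL // fsum_link_weight b0 add0r.
Qed.

(** * Joins of squares and pentagons *)

(* Two polygons on 'I_5: the square 0-1-2-3-0 (vertex 4 unused) and the
   pentagon 0-4-1-2-3-0, obtained by subdividing the edge 01 of the square. *)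
Definition polyV (p : bool) : {set 'I_5} := [set j : 'I_5 | p || (j != 4 :> nat)].

Definition polyE (p : bool) (x y : 'I_5) : bool :=
  let e a b := ((x == a :> nat) && (y == b :> nat)) || ((x == b :> nat) && (y == a :> nat)) in
  if p then [|| e 0 4, e 4 1, e 1 2, e 2 3 | e 3 0]%N
  else [|| e 0 1, e 1 2, e 2 3 | e 3 0]%N.

Definition poly_face (p : bool) (A : {set 'I_5}) : bool :=
  (A \subset polyV p) && [forall x in A, forall y in A, (x == y) || polyE p x y].

Definition poly_link_face (p : bool) (a : 'I_5) (A : {set 'I_5}) : bool :=
  [&& poly_face p A, a \notin A & poly_face p (a |: A)].

Definition nbr1 (p : bool) (a : 'I_5) : 'I_5 :=
  inord (if p then match val a with 0 => 4 | 4 => 1 | 1 => 2 | 2 => 3 | _ => 0 end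
         else match val a with 0 => 1 | 1 => 2 | 2 => 3 | _ => 0 end).

Definition nbr2 (p : bool) (a : 'I_5) : 'I_5 :=
  inord (if p then match val a with 0 => 3 | 4 => 0 | 1 => 4 | 2 => 1 | _ => 2 end
         else match val a with 0 => 3 | 1 => 0 | 2 => 1 | _ => 2 end).

Ltac case_ord5 x := case: x => [[|[|[|[|[|?]]]]] ?] //.

Lemma polyE_sym p x y : polyE p x y = polyE p y x.
Proof. by case: p; case_ord5 x; case_ord5 y. Qed.

Lemma polyE_V p x y : polyE p x y -> x \in polyV p.
Proof. by rewrite inE; case: p; case_ord5 x; case_ord5 y. Qed.

Lemma polyE_neq p x y : polyE p x y -> x != y.
Proof. by case: p; case_ord5 x; case_ord5 y. Qed.

Lemma polyE_triangle_free p x y z :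
  polyE p x y -> polyE p x z -> y != z -> ~~ polyE p y z.
Proof. by case: p; case_ord5 x; case_ord5 y; case_ord5 z. Qed.

Lemma polyE_nbr1 p a : a \in polyV p -> polyE p a (nbr1 p a).
Proof. by rewrite inE /nbr1; case: p; case_ord5 a => _; rewrite /polyE /= inordK. Qed.

Lemma polyE_nbr2 p a : a \in polyV p -> polyE p a (nbr2 p a).
Proof. by rewrite inE /nbr2; case: p; case_ord5 a => _; rewrite /polyE /= inordK. Qed.

Lemma nbr1_neq_nbr2 p a : a \in polyV p -> nbr1 p a != nbr2 p a.
Proof.
by rewrite inE /nbr1 /nbr2; case: p; case_ord5 a => _; rewrite -val_eqE /= !inordK.
Qed.

Lemma polyE_nbr p a n : polyE p a n -> (n == nbr1 p a) || (n == nbr2 p a).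
Proof.
by rewrite /nbr1 /nbr2; case: p; case_ord5 a; case_ord5 n => _; rewrite -!val_eqE /= !inordK.
Qed.

Lemma poly_faceP p (A : {set 'I_5}) :
  reflect (A \subset polyV p /\ {in A &, forall x y, x != y -> polyE p x y})
          (poly_face p A).
Proof.
apply: (iffP andP) => [[sA /forall_inP H]|[sA H]]; split => //.
  move=> x y xA yA xy; have /forall_inP /(_ y yA) := H x xA.
  by rewrite (negbTE xy).
apply/forall_inP => x xA; apply/forall_inP => y yA.
by case: eqP => [//|/eqP xy]; rewrite H.
Qed.

Lemma poly_face_sub p (A B : {set 'I_5}) : B \subset A -> poly_face p A -> poly_face p B.
Proof.
move=> BA /poly_faceP [sA H]; apply/poly_faceP; split; first exact: subset_trans sA.
by move=> x y xB yB; apply: H; apply: (subsetP BA).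
Qed.

Lemma poly_face0 p : poly_face p set0.
Proof. by apply/poly_faceP; split => [|x y]; rewrite ?sub0set ?inE. Qed.

Lemma poly_face1 p j : poly_face p [set j] = (j \in polyV p).
Proof.
apply/poly_faceP/idP => [[]|jv]; first by rewrite sub1set.
by split => [|x y]; rewrite ?sub1set // !inE => /eqP -> /eqP ->; rewrite eqxx.
Qed.

Lemma poly_face2 p x y : polyE p x y -> poly_face p [set x; y].
Proof.
move=> xy; apply/poly_faceP; split.
  apply/subsetP => z; rewrite in_set2 => /orP [] /eqP ->; first exact: (polyE_V xy).
  by rewrite polyE_sym in xy; apply: (polyE_V xy).
by move=> u w; rewrite !in_set2 => /orP [] /eqP -> /orP [] /eqP ->; rewrite ?eqxx // polyE_sym.
Qed.

Lemma poly_face_edge p A : poly_face p A -> exists x y, polyE p x y /\ A \subset [set x; y].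
Proof.
move=> pA; have [sA H] := poly_faceP _ _ pA.
have [A0|[x xA]] := set_0Vmem A.
  have v0 : (ord0 : 'I_5) \in polyV p by rewrite inE; case: (p).
  by exists ord0, (nbr1 p ord0); split; [apply: polyE_nbr1 | rewrite A0 sub0set].
have xv : x \in polyV p by apply: (subsetP sA).
have [Ax|[y /setD1P [yx yA]]] := set_0Vmem (A :\ x).
  exists x, (nbr1 p x); split; first exact: polyE_nbr1.
  apply/subsetP => z zA; rewrite !inE; case: (z =P x) => //= /eqP zx.
  have : z \in A :\ x by rewrite !inE zx zA.
  by rewrite Ax inE.
exists x, y; split; first by apply: H; rewrite // eq_sym.
apply/subsetP => z zA; rewrite !inE; case: (z =P x) => //= /eqP zx.
case: (z =P y) => //= /eqP zy.
have xy : x != y by rewrite eq_sym.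
have xz : x != z by rewrite eq_sym.
have yz : y != z by rewrite eq_sym.
by have := polyE_triangle_free (H _ _ xA yA xy) (H _ _ xA zA xz) yz; rewrite H.
Qed.

Lemma poly_link_faceP p a A : poly_link_face p a A ->
  A = set0 \/ exists2 n, polyE p a n & A = [set n].
Proof.
case/and3P => pA aA /poly_faceP [_ H].
have [->|[n nA]] := set_0Vmem A; first by left.
have aE z : z \in A -> polyE p a z.
  by move=> zA; apply: H; rewrite ?setU11 ?inE ?zA ?orbT //; apply: contraNneq aA => ->.
right; exists n; first exact: aE.
apply/setP => z; rewrite inE; apply/idP/eqP => [zA|->//].
apply/eqP/negPn/negP => zn.
have := polyE_triangle_free (aE _ nA) (aE _ zA); rewrite eq_sym zn => /(_ isT).
by rewrite H ?inE ?nA ?zA ?orbT // eq_sym.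
Qed.

Lemma poly_link_face0 p a : a \in polyV p -> poly_link_face p a set0.
Proof. by move=> av; rewrite /poly_link_face poly_face0 inE setU0 poly_face1 av. Qed.

Lemma poly_link_face1 p a n : polyE p a n -> poly_link_face p a [set n].
Proof.
move=> an; have nv : n \in polyV p by rewrite polyE_sym in an; apply: polyE_V an.
by rewrite /poly_link_face poly_face1 nv !inE (polyE_neq an) poly_face2.
Qed.

Section BlockIndex.
Variable k : nat.
Implicit Types (S T : {set 'I_(k * 5)}) (i : 'I_k) (j : 'I_5) (u : 'I_(k * 5)).

Definition bidx i j : 'I_(k * 5) := mxvec_index i j.

Definition unbidx u : 'I_k * 'I_5 := enum_val (cast_ord (esym (mxvec_cast k 5)) u).

Lemma bidxK i j : unbidx (bidx i j) = (i, j).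
Proof. by rewrite /unbidx /bidx /mxvec_index cast_ordK enum_rankK. Qed.

Lemma unbidxK u : bidx (unbidx u).1 (unbidx u).2 = u.
Proof. by case/mxvec_indexP: u => i j; rewrite -/(bidx i j) bidxK. Qed.

Lemma bidx_inj i j i' j' : bidx i j = bidx i' j' -> i = i' /\ j = j'.
Proof. by move/(congr1 unbidx); rewrite !bidxK => -[-> ->]. Qed.

Lemma eq_bidx i j i' j' : (bidx i j == bidx i' j') = (i == i') && (j == j').
Proof. by apply/eqP/andP => [/bidx_inj [-> ->]|[/eqP -> /eqP ->]]. Qed.

Lemma big_bidx (V : nmodType) (P : pred 'I_(k * 5)) (F : 'I_(k * 5) -> V) :
  \sum_(u | P u) F u = \sum_(i < k) \sum_(j | P (bidx i j)) F (bidx i j).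
Proof.
rewrite pair_big_dep /= (reindex (fun p : 'I_k * 'I_5 => bidx p.1 p.2)) //.
by exists unbidx => [[i j] _|u _]; rewrite ?bidxK ?unbidxK.
Qed.

Definition block S i : {set 'I_5} := [set j | bidx i j \in S].

Lemma block0 i : block set0 i = set0.
Proof. by apply/setP => j; rewrite !inE. Qed.

Lemma blockS S T i : S \subset T -> block S i \subset block T i.
Proof. by move=> ST; apply/subsetP => j; rewrite !inE; apply: (subsetP ST). Qed.

Lemma blockU S T i : block (S :|: T) i = block S i :|: block T i.
Proof. by apply/setP => j; rewrite !inE. Qed.

Lemma block1 i j i' : block [set bidx i j] i' = if i' == i then [set j] else set0.
Proof. by apply/setP => j'; rewrite !inE eq_bidx; case: eqVneq; rewrite ?inE. Qed.

End BlockIndex.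

(* The join of k polygons, the i-th on the vertices bidx i _ and a pentagon
   iff s i. *)
Section PolygonJoin.
Variables (k : nat) (s : {ffun 'I_k -> bool}).

Definition polyjoin_faces : {set {set 'I_(k * 5)}} :=
  [set S | [forall i, poly_face (s i) (block S i)]].

Lemma polyjoin_faces_set0 : set0 \in polyjoin_faces.
Proof. by rewrite inE; apply/forallP => i; rewrite block0 poly_face0. Qed.

Lemma polyjoin_faces_closed : [forall S in polyjoin_faces, forall T : {set 'I_(k * 5)},
                                (T \subset S) ==> (T \in polyjoin_faces)].
Proof.
apply/forall_inP => S; rewrite inE => /forallP H; apply/forallP => T; apply/implyP => TS.
by rewrite inE; apply/forallP => i; apply: (poly_face_sub (blockS i TS)).
Qed.

Definition polyjoin : complex :=
  @Complex (k * 5) polyjoin_faces polyjoin_faces_set0 polyjoin_faces_closed.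

Lemma polyjoinE (S : {set 'I_(k * 5)}) :
  (S \in faces polyjoin) = [forall i, poly_face (s i) (block S i)].
Proof. by rewrite inE. Qed.

Lemma polyjoin_Vert i j : (bidx i j \in Vert polyjoin) = (j \in polyV (s i)).
Proof.
rewrite inE polyjoinE; apply/forallP/idP => [/(_ i)|jv i'].
  by rewrite block1 eqxx poly_face1.
by rewrite block1; case: (i' =P i) => [->|]; rewrite ?poly_face1 ?poly_face0.
Qed.

Lemma polyjoin_linkE i a (S : {set 'I_(k * 5)}) : a \in polyV (s i) ->
  (S \in faces (link polyjoin (bidx i a))) =
  [forall i', if i' == i then poly_link_face (s i) a (block S i')
              else poly_face (s i') (block S i')].
Proof.
move=> av; rewrite /= /link_faces in_setU in_set1 inE.
case: (S =P set0) => [->|_]; rewrite ?orbT ?orbF.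
  symmetry; apply/forallP => i'; rewrite block0.
  by case: (i' == i); rewrite ?poly_link_face0 ?poly_face0.
rewrite !polyjoinE; apply/and3P/forallP => [[/forallP H1 vS /forallP H2] i'|H].
  case: (i' =P i) => [->|/eqP ne]; last exact: H1.
  rewrite /poly_link_face H1 /=; move: (H2 i); rewrite blockU block1 eqxx => ->.
  by rewrite andbT inE.
split.
- apply/forallP => i'; have := H i'; case: (i' =P i) => [->|//].
  by case/and3P.
- by have := H i; rewrite eqxx => /and3P [_ + _]; rewrite inE.
- apply/forallP => i'; have := H i'; rewrite blockU block1.
  case: (i' =P i) => [->|_]; last by rewrite set0U.
  by case/and3P.
Qed.

Lemma polyjoin_flag : flag polyjoin.
Proof.
move=> S SV H; rewrite polyjoinE; apply/forallP => i; apply/poly_faceP; split.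
  apply/subsetP => j; rewrite inE => jS.
  by have := subsetP SV _ jS; rewrite polyjoin_Vert.
move=> x y; rewrite !inE => xS yS xy.
have := H _ _ xS yS; rewrite eq_bidx eqxx xy polyjoinE => /(_ isT) /forallP /(_ i).
by rewrite blockU !block1 eqxx => /poly_faceP [_]; apply; rewrite ?inE ?eqxx ?orbT.
Qed.

End PolygonJoin.

(* The link of a vertex a in block i is the pair of neighbours of a joined with
   the other blocks: it does not depend on the polygon of block i, nor on a. *)
Section LinkIso.
Variables (k : nat) (s s' : {ffun 'I_k -> bool}) (i : 'I_k) (a a' : 'I_5).

Definition nbr_swap (j : 'I_5) : 'I_5 :=
  if j == nbr1 (s i) a then nbr1 (s' i) a'
  else if j == nbr2 (s i) a then nbr2 (s' i) a' else j.

Definition link_map (u : 'I_(k * 5)) : 'I_(k * 5) :=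
  if (unbidx u).1 == i then bidx i (nbr_swap (unbidx u).2) else u.

Lemma link_map_bidx i0 j0 :
  link_map (bidx i0 j0) = if i0 == i then bidx i (nbr_swap j0) else bidx i0 j0.
Proof. by rewrite /link_map bidxK. Qed.

Lemma block_link_map (S : {set 'I_(k * 5)}) i' :
  block (link_map @: S) i' = if i' == i then nbr_swap @: block S i else block S i'.
Proof.
apply/setP => j; rewrite inE; apply/imsetP/idP.
  case=> u uS; rewrite -(unbidxK u) in uS *; case: (unbidx u) uS => i0 j0 /= uS.
  rewrite link_map_bidx; case: (i0 =P i) => [e|ne] /bidx_inj [-> ->].
    by rewrite eqxx; apply/imsetP; exists j0; rewrite ?inE -?e.
  by case: (i0 =P i) ne => // _ _; rewrite inE.
case: (i' =P i) => [->|ne].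
  case/imsetP => j0; rewrite inE => j0S ->; exists (bidx i j0) => //.
  by rewrite link_map_bidx eqxx.
by rewrite inE => jS; exists (bidx i' j) => //; rewrite link_map_bidx; case: (i' =P i) ne.
Qed.

Hypothesis ss' : forall i0, i0 != i -> s i0 = s' i0.
Hypothesis av : a \in polyV (s i).
Hypothesis av' : a' \in polyV (s' i).

Lemma polyE_nbr_swap n : polyE (s i) a n -> polyE (s' i) a' (nbr_swap n).
Proof.
rewrite /nbr_swap => an; case/orP: (polyE_nbr an) => /eqP ->; rewrite eqxx.
  exact: polyE_nbr1.
by rewrite eq_sym (negbTE (nbr1_neq_nbr2 av)); exact: polyE_nbr2.
Qed.

Lemma link_map_face (S : {set 'I_(k * 5)}) :
  S \in faces (link (polyjoin s) (bidx i a)) ->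
  link_map @: S \in faces (link (polyjoin s') (bidx i a')).
Proof.
rewrite (@polyjoin_linkE _ _ _ _ _ av) (@polyjoin_linkE _ _ _ _ _ av') => /forallP H.
apply/forallP => i'; rewrite block_link_map; have := H i'.
case: (i' =P i) => [->|/eqP ne]; last by rewrite ss'.
case/poly_link_faceP => [->|[n an ->]]; first by rewrite imset0 poly_link_face0.
by rewrite imset_set1; apply/poly_link_face1/polyE_nbr_swap.
Qed.

End LinkIso.

Lemma link_mapK k (s s' : {ffun 'I_k -> bool}) i a a' :
  a \in polyV (s i) -> a' \in polyV (s' i) ->
  {in Vert (link (polyjoin s) (bidx i a)),
    cancel (link_map s s' i a a') (link_map s' s i a' a)}.
Proof.
move=> av av' u; rewrite inE (@polyjoin_linkE _ _ _ _ _ av) -(unbidxK u).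
case: (unbidx u) => i0 j0 /= /forallP /(_ i0); rewrite block1 eqxx.
have [->|ne] := eqVneq i0 i; last first.
  by move=> _; rewrite link_map_bidx (negbTE ne) link_map_bidx (negbTE ne).
rewrite link_map_bidx eqxx link_map_bidx eqxx => /poly_link_faceP [/setP/(_ j0)|[n an]].
  by rewrite !inE eqxx.
move/setP/(_ j0); rewrite !inE eqxx => /esym /eqP ->; congr bidx.
have n12 p b : b \in polyV p -> (nbr2 p b == nbr1 p b) = false.
  by move=> bv; rewrite eq_sym (negbTE (nbr1_neq_nbr2 bv)).
by rewrite /nbr_swap; case/orP: (polyE_nbr an) => /eqP ->; rewrite !eqxx ?n12 ?eqxx.
Qed.

Lemma polyjoin_link_equiv k (s s' : {ffun 'I_k -> bool}) i a a' :
  (forall i0, i0 != i -> s i0 = s' i0) ->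
  a \in polyV (s i) -> a' \in polyV (s' i) ->
  comb_equiv (link (polyjoin s) (bidx i a)) (link (polyjoin s') (bidx i a')).
Proof.
move=> ss' av av'; have s's i0 : i0 != i -> s' i0 = s i0 by move/ss'.
exists (link_map s s' i a a'), (link_map s' s i a' a).
by split; [exact: link_map_face | exact: link_map_face | exact: link_mapK | exact: link_mapK].
Qed.

Definition flip k (i : 'I_k) (s : {ffun 'I_k -> bool}) : {ffun 'I_k -> bool} :=
  [ffun j => if j == i then ~~ s j else s j].

Lemma flipK k (i : 'I_k) : involutive (flip i).
Proof. by move=> s; apply/ffunP => j; rewrite !ffunE; case: (j == i); rewrite ?negbK. Qed.

Lemma flip_neq k (i : 'I_k) s i0 : i0 != i -> flip i s i0 = s i0.
Proof. by move=> ne; rewrite ffunE (negbTE ne). Qed.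

Lemma card_polyV p : #|polyV p| = (if p then 5 else 4)%N.
Proof.
case: p.
  by rewrite (_ : polyV true = setT) ?cardsT ?card_ord //; apply/setP => j; rewrite !inE.
rewrite (_ : polyV false = [set~ ord_max]) ?cardsC1 ?card_ord //.
by apply/setP => j; rewrite !inE -val_eqE.
Qed.

Lemma ord0_polyV p : (ord0 : 'I_5) \in polyV p.
Proof. by rewrite inE; case: p. Qed.

(* The weights of the 2^k joins add up to (5 - 4)^k = 1, and flipping the
   polygon of block i negates weight * #|vertices of block i| (5 * -4 vs 4 * 5). *)
Section WeightedLinkSum.
Variables (R : numFieldType) (k : nat) (g : complex -> R).
Hypothesis g_link : forall (s s' : {ffun 'I_k -> bool}) i a a',
  (forall i0, i0 != i -> s i0 = s' i0) -> a \in polyV (s i) -> a' \in polyV (s' i) ->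
  g (link (polyjoin s) (bidx i a)) = g (link (polyjoin s') (bidx i a')).

Definition poly_weight (p : bool) : R := if p then -4 else 5.

Definition join_weight (s : {ffun 'I_k -> bool}) : R := \prod_(i < k) poly_weight (s i).

Lemma sum_join_weight : \sum_(s : {ffun 'I_k -> bool}) join_weight s = 1.
Proof.
rewrite /join_weight -(bigA_distr_bigA (fun (i : 'I_k) b => poly_weight b)) /=.
by rewrite big1 // => i _; rewrite big_bool /poly_weight /=; ring.
Qed.

Lemma join_weight_flip i s :
  join_weight (flip i s) * (#|polyV (flip i s i)|)%:R = - (join_weight s * (#|polyV (s i)|)%:R).
Proof.
rewrite /join_weight (bigD1 i) // [in RHS](bigD1 i) //=.
rewrite (eq_bigr (fun j => poly_weight (s j))) => [|j /flip_neq -> //].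
by rewrite !ffunE eqxx !card_polyV /poly_weight; case: (s i) => /=; ring.
Qed.

Lemma sum_polyjoin_link (s : {ffun 'I_k -> bool}) :
  \sum_(v in Vert (polyjoin s)) g (link (polyjoin s) v) =
  \sum_(i < k) (#|polyV (s i)|)%:R * g (link (polyjoin s) (bidx i ord0)).
Proof.
rewrite big_bidx; apply: eq_bigr => i _.
rewrite -sum1_card natr_sum big_distrl /=; apply: eq_big => [j|j jv].
  by rewrite polyjoin_Vert.
by rewrite mul1r (@g_link s s i j ord0) ?ord0_polyV // -polyjoin_Vert.
Qed.

Lemma weighted_sum_polyjoin_link :
  \sum_(s : {ffun 'I_k -> bool}) join_weight s *
     \sum_(v in Vert (polyjoin s)) g (link (polyjoin s) v) = 0.
Proof.
under eq_bigr => s _ do rewrite sum_polyjoin_link big_distrr /=.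
rewrite exchange_big /=; apply: big1 => i _.
set F := fun s : {ffun 'I_k -> bool} =>
  join_weight s * ((#|polyV (s i)|)%:R * g (link (polyjoin s) (bidx i ord0))).
have F_flip s : F (flip i s) = - F s.
  rewrite /F !mulrA join_weight_flip mulNr; congr (- (_ * _)).
  by apply: g_link; rewrite ?ord0_polyV // => i0 /flip_neq ->.
have : \sum_s F s = - \sum_s F s.
  rewrite {1}(reindex_inj (inv_inj (flipK i))) /= -sumrN.
  by apply: eq_bigr => s _; rewrite F_flip.
by move/eqP; rewrite -addr_eq0 -mulr2n mulrn_eq0 => /eqP.
Qed.

End WeightedLinkSum.

(** * Joins of polygons are spheres *)

Section PolygonCoordinates.
Variable R : realType.

(* Closed forms of max t 0 and min a b, convenient for case splits on `|_|. *)
Definition ppart (t : R) : R := (t + `|t|) / 2.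
Definition amin (a b : R) : R := (a + b - `|a - b|) / 2.

(* Vertex j of polygon p sits at (vpos false j, vpos true j) in the plane: the
   square on (1,0), (0,1), (-1,0), (0,-1), the pentagon with (1,1) added. *)
Definition vpos (c : bool) (j : 'I_5) : R :=
  if c then match val j with 1 => 1 | 3 => -1 | 4 => 1 | _ => 0 end
  else match val j with 0 => 1 | 2 => -1 | 4 => 1 | _ => 0 end.

(* bary p j y is the coefficient of vertex j in the unique decomposition of the
   point y of the plane along the cone over an edge of polygon p. *)
Definition bary (p : bool) (j : 'I_5) (y1 y2 : R) : R :=
  if p then
    match val j with
    | 0 => ppart (y1 - ppart y2) | 1 => ppart (y2 - ppart y1) | 2 => ppart (- y1)
    | 3 => ppart (- y2) | _ => ppart (amin y1 y2) end
  else
    match val j with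
    | 0 => ppart y1 | 1 => ppart y2 | 2 => ppart (- y1) | 3 => ppart (- y2) | _ => 0 end.

Ltac split_norms :=
  repeat match goal with
  | |- context [`|?t|] =>
      lazymatch t with context [`|_|] => fail | _ => idtac end;
      let H := fresh "H" in
      case: (lerP 0 t) => H; [rewrite (ger0_norm H) | rewrite (ltr0_norm H)]
  end.

Lemma bary_ge0 p j y1 y2 : 0 <= bary p j y1 y2.
Proof. by rewrite /bary; case: p; case_ord5 j; rewrite /= /ppart /amin; split_norms; lra. Qed.

Lemma bary_edge p (x y : 'I_5) (u v : R) : polyE p x y -> 0 <= u -> 0 <= v ->
  forall j, bary p j (u * vpos false x + v * vpos false y) (u * vpos true x + v * vpos true y)
            = (if j == x then u else if j == y then v else 0).
Proof.
move=> + u0 v0 j.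
by case: p; case_ord5 x; case_ord5 y; case_ord5 j; rewrite /bary /vpos /ppart /amin /=;
   split_norms; lra.
Qed.

Lemma sector_decomp p (y1 y2 : R) : exists x y (u v : R), [/\ polyE p x y, 0 <= u, 0 <= v,
  y1 = u * vpos false x + v * vpos false y & y2 = u * vpos true x + v * vpos true y].
Proof.
case: p; case: (lerP 0 y1) => h1; case: (lerP 0 y2) => h2.
- case: (lerP y2 y1) => h3.
  + by exists (@Ordinal 5 0 isT), (@Ordinal 5 4 isT), (y1 - y2), y2; split => //=; lra.
  + by exists (@Ordinal 5 4 isT), (@Ordinal 5 1 isT), y1, (y2 - y1); split => //=; lra.
- by exists (@Ordinal 5 3 isT), (@Ordinal 5 0 isT), (- y2), y1; split => //=; lra.
- by exists (@Ordinal 5 1 isT), (@Ordinal 5 2 isT), y2, (- y1); split => //=; lra.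
- by exists (@Ordinal 5 2 isT), (@Ordinal 5 3 isT), (- y1), (- y2); split => //=; lra.
- by exists (@Ordinal 5 0 isT), (@Ordinal 5 1 isT), y1, y2; split => //=; lra.
- by exists (@Ordinal 5 3 isT), (@Ordinal 5 0 isT), (- y2), y1; split => //=; lra.
- by exists (@Ordinal 5 1 isT), (@Ordinal 5 2 isT), y2, (- y1); split => //=; lra.
- by exists (@Ordinal 5 2 isT), (@Ordinal 5 3 isT), (- y1), (- y2); split => //=; lra.
Qed.

Lemma sum_sel (x y : 'I_5) (u v : R) (F : 'I_5 -> R) : x != y ->
  \sum_j (if j == x then u else if j == y then v else 0) * F j = u * F x + v * F y.
Proof.
move=> xy; rewrite (bigD1 x) //= eqxx (bigD1 y) 1?eq_sym //= eqxx (negbTE xy) addrA.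
by rewrite big1 ?addr0 // => j /andP [/negbTE -> /negbTE ->]; rewrite mul0r.
Qed.

Lemma sum_bary_vpos p c y1 y2 :
  \sum_(j < 5) bary p j y1 y2 * vpos c j = if c then y2 else y1.
Proof.
have [x [y [u [v [xy u0 v0 -> ->]]]]] := sector_decomp p y1 y2.
under eq_bigr => j _ do rewrite (bary_edge xy u0 v0 j).
by rewrite sum_sel ?(polyE_neq xy) //; case: c.
Qed.

Lemma sum_bary_eq0 p y1 y2 : \sum_(j < 5) bary p j y1 y2 = 0 -> y1 = 0 /\ y2 = 0.
Proof.
move=> /eqP; rewrite psumr_eq0 => [/allP bary0|j _]; last exact: bary_ge0.
have {}bary0 j : bary p j y1 y2 = 0 by apply/eqP/(implyP (bary0 j (mem_index_enum _))).
have := sum_bary_vpos p false y1 y2; have := sum_bary_vpos p true y1 y2.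
by rewrite !big1 // => j _; rewrite bary0 mul0r.
Qed.

Lemma bary_supp p (y1 y2 : R) : exists x y, polyE p x y /\
  (forall j : 'I_5, j != x -> j != y -> bary p j y1 y2 = 0).
Proof.
have [x [y [u [v [xy u0 v0 -> ->]]]]] := sector_decomp p y1 y2.
by exists x, y; split => // j /negbTE jx /negbTE jy; rewrite (bary_edge xy u0 v0 j) jx jy.
Qed.

Lemma bary_homo p j (t y1 y2 : R) : 0 <= t -> bary p j (t * y1) (t * y2) = t * bary p j y1 y2.
Proof.
move=> t0; have [x [y [u [v [xy u0 v0 -> ->]]]]] := sector_decomp p y1 y2.
rewrite !mulrDr !mulrA (bary_edge xy (mulr_ge0 t0 u0) (mulr_ge0 t0 v0)) (bary_edge xy u0 v0).
by case: (j == x); case: (j == y); rewrite ?mulr0.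
Qed.

Lemma bary00 p j : bary p j 0 0 = 0.
Proof. by have := @bary_homo p j 0 0 0 (lexx _); rewrite !mul0r. Qed.

End PolygonCoordinates.

Arguments vpos {R}.

Section SphereIndex.
Variables (k d : nat) (kd : (k * 2)%N = d.+1).

Definition sidx (i : 'I_k) (c : bool) : 'I_d.+1 :=
  cast_ord kd (mxvec_index i (if c then ord_max else ord0)).

Definition unsidx (l : 'I_d.+1) : 'I_k * bool :=
  let p := enum_val (cast_ord (esym (mxvec_cast k 2)) (cast_ord (esym kd) l)) in
  (p.1, val p.2 != 0%N).

Lemma sidxK i c : unsidx (sidx i c) = (i, c).
Proof. by rewrite /unsidx /sidx /mxvec_index !cast_ordK enum_rankK /=; case: c. Qed.

Lemma unsidxK l : sidx (unsidx l).1 (unsidx l).2 = l.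
Proof.
rewrite -[l](cast_ordKV kd); case/mxvec_indexP: (cast_ord (esym kd) l) => i c.
rewrite /unsidx /sidx /mxvec_index !cast_ordK enum_rankK /=; congr (cast_ord _ _).
by congr (cast_ord _ (enum_rank (_, _))); apply: val_inj; case: c => [[|[|?]] ?].
Qed.

Lemma big_sidx (V : nmodType) (F : 'I_d.+1 -> V) :
  \sum_l F l = \sum_(i < k) \sum_(c : bool) F (sidx i c).
Proof.
rewrite pair_big /= (reindex (fun p : 'I_k * bool => sidx p.1 p.2)) //.
by exists unsidx => [[i c] _|l _]; rewrite ?sidxK ?unsidxK.
Qed.

End SphereIndex.

(* A point x of |polyjoin s| is sent to the sphere by projecting each block to
   the plane with vpos and normalizing; bary inverts the projection. *)
Section PolyjoinSphere.
Variables (R : realType) (k d : nat) (kd : (k * 2)%N = d.+1) (s : {ffun 'I_k -> bool}).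
Implicit Types (x : 'rV[R]_(k * 5)) (z : 'rV[R]_d.+1).

Definition pcoord x i (c : bool) : R := \sum_(j < 5) x ord0 (bidx i j) * vpos c j.
Definition pnorm2 x := \sum_(i < k) \sum_(c : bool) pcoord x i c ^+ 2.

Definition to_sphere x : 'rV[R]_d.+1 :=
  \row_l (pcoord x (unsidx kd l).1 (unsidx kd l).2 / Num.sqrt (pnorm2 x)).

Definition scoord z i c := z ord0 (sidx kd i c).

Definition bary_mass z :=
  \sum_(i < k) \sum_(j < 5) bary (s i) j (scoord z i false) (scoord z i true).

Definition from_sphere z : 'rV[R]_(k * 5) :=
  \row_u (bary (s (unbidx u).1) (unbidx u).2
            (scoord z (unbidx u).1 false) (scoord z (unbidx u).1 true) / bary_mass z).

Lemma realization_block_edge x : realization R (polyjoin s) x ->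
  forall i, exists a b, polyE (s i) a b /\
    (forall j, j != a -> j != b -> x ord0 (bidx i j) = 0).
Proof.
case=> _ [_]; rewrite polyjoinE => /forallP sx i.
have [a [b [ab sub]]] := poly_face_edge (sx i).
exists a, b; split => // j ja jb; apply/eqP/negPn/negP => nz.
have : j \in block [set u | x ord0 u != 0] i by rewrite !inE.
by move/(subsetP sub); rewrite !inE (negbTE ja) (negbTE jb).
Qed.

Lemma bary_pcoord x : realization R (polyjoin s) x ->
  forall i j, bary (s i) j (pcoord x i false) (pcoord x i true) = x ord0 (bidx i j).
Proof.
move=> rx i j; have [a [b [ab xab]]] := realization_block_edge rx i.
have [x0 _] := rx.
have xE j' : x ord0 (bidx i j') =
    if j' == a then x ord0 (bidx i a) else if j' == b then x ord0 (bidx i b) else 0.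
  by case: (j' =P a) => [->//|/eqP ja]; case: (j' =P b) => [->//|/eqP jb]; apply: xab.
have pcoordE c : pcoord x i c = x ord0 (bidx i a) * vpos c a + x ord0 (bidx i b) * vpos c b.
  by rewrite /pcoord; under eq_bigr => j' _ do rewrite xE; rewrite sum_sel // (polyE_neq ab).
by rewrite !pcoordE (bary_edge ab (x0 _) (x0 _)) -xE.
Qed.

Lemma pnorm2_gt0 x : realization R (polyjoin s) x -> 0 < pnorm2 x.
Proof.
move=> rx; have [_ [x1 _]] := rx.
have sq_ge0 i : 0 <= \sum_(c : bool) pcoord x i c ^+ 2 by apply: sumr_ge0 => c _; apply: sqr_ge0.
rewrite lt_def sumr_ge0 // andbT; apply/eqP => /eqP; rewrite psumr_eq0 // => /allP pcoord0.
move/eqP: x1; rewrite big_bidx big1 ?(eq_sym 0) ?oner_eq0 // => i _; apply: big1 => j _.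
have /= := pcoord0 i (mem_index_enum _).
rewrite psumr_eq0 => [/allP sq0|c _]; last exact: sqr_ge0.
have p0 c : pcoord x i c = 0 by apply/eqP; rewrite -sqrf_eq0; apply: sq0; rewrite mem_index_enum.
by rewrite -(bary_pcoord rx) !p0 bary00.
Qed.

Lemma scoord_to_sphere x i c : scoord (to_sphere x) i c = pcoord x i c / Num.sqrt (pnorm2 x).
Proof. by rewrite /scoord /to_sphere mxE sidxK. Qed.

Lemma to_sphere_sphere x : realization R (polyjoin s) x -> sphere R d (to_sphere x).
Proof.
move=> rx; have p0 := pnorm2_gt0 rx.
rewrite /sphere /= (big_sidx kd).
under eq_bigr => i _ do under eq_bigr => c _ do
  rewrite -/(scoord _ _ _) scoord_to_sphere expr_div_n.
under eq_bigr => i _ do rewrite -big_distrl /=.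
by rewrite -big_distrl /= sqr_sqrtr ?divff ?gt_eqF // ltW.
Qed.

Lemma to_sphereK x : realization R (polyjoin s) x -> from_sphere (to_sphere x) = x.
Proof.
move=> rx; have n0 : 0 < Num.sqrt (pnorm2 x) by rewrite sqrtr_gt0 pnorm2_gt0.
have baryE i j : bary (s i) j (scoord (to_sphere x) i false) (scoord (to_sphere x) i true)
                 = x ord0 (bidx i j) / Num.sqrt (pnorm2 x).
  by rewrite !scoord_to_sphere ![_ / _]mulrC bary_homo ?invr_ge0 ?ltW // bary_pcoord // mulrC.
have mass : bary_mass (to_sphere x) = (Num.sqrt (pnorm2 x))^-1.
  rewrite /bary_mass; under eq_bigr => i _ do under eq_bigr => j _ do rewrite baryE.
  under eq_bigr => i _ do rewrite -big_distrl /=.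
  by have [_ [x1 _]] := rx; rewrite -big_distrl /= -(big_bidx predT) x1 mul1r.
apply/rowP => u; rewrite mxE baryE mass -[in RHS](unbidxK u).
by rewrite invrK -mulrA mulVf ?mulr1 ?gt_eqF.
Qed.

Lemma bary_mass_gt0 z : sphere R d z -> 0 < bary_mass z.
Proof.
move=> z1; have mass_ge0 i : 0 <= \sum_(j < 5) bary (s i) j (scoord z i false) (scoord z i true).
  by apply: sumr_ge0 => j _; apply: bary_ge0.
rewrite lt_def sumr_ge0 // andbT; apply/eqP => /eqP; rewrite psumr_eq0 // => /allP mass0.
move: z1; rewrite /sphere /= (big_sidx kd) big1 => [/eqP|i _]; first by rewrite eq_sym oner_eq0.
have [z0 z1] := sum_bary_eq0 (eqP (mass0 i (mem_index_enum _))).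
by rewrite big_bool /= -!/(scoord z i _) z0 z1 expr0n addr0.
Qed.

Lemma from_sphere_realization z : sphere R d z -> realization R (polyjoin s) (from_sphere z).
Proof.
move=> z1; have m0 := bary_mass_gt0 z1; split; [|split].
- by move=> u; rewrite mxE divr_ge0 ?bary_ge0 ?ltW.
- rewrite big_bidx; under eq_bigr => i _ do under eq_bigr => j _ do rewrite mxE bidxK /=.
  under eq_bigr => i _ do rewrite -big_distrl /=.
  by rewrite -big_distrl /= divff ?gt_eqF.
- rewrite polyjoinE; apply/forallP => i.
  have [a [b [ab bary0]]] := bary_supp (s i) (scoord z i false) (scoord z i true).
  apply: (poly_face_sub _ (poly_face2 ab)); apply/subsetP => j; rewrite !inE mxE bidxK /=.
  by apply: contraR; rewrite negb_or => /andP [ja jb]; rewrite bary0 // mul0r.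
Qed.

Lemma pcoord_from_sphere z i c : pcoord (from_sphere z) i c = scoord z i c / bary_mass z.
Proof.
rewrite /pcoord; under eq_bigr => j _ do rewrite mxE bidxK /= mulrAC.
by rewrite -big_distrl /= sum_bary_vpos; case: c.
Qed.

Lemma from_sphereK z : sphere R d z -> to_sphere (from_sphere z) = z.
Proof.
move=> z1; have m0 := bary_mass_gt0 z1.
have norm : Num.sqrt (pnorm2 (from_sphere z)) = (bary_mass z)^-1.
  rewrite /pnorm2.
  under eq_bigr => i _ do under eq_bigr => c _ do rewrite pcoord_from_sphere expr_div_n.
  under eq_bigr => i _ do rewrite -big_distrl /=.
  rewrite -big_distrl /= -(big_sidx kd (fun l => z ord0 l ^+ 2)) z1 mul1r -exprVn.
  by rewrite sqrtr_sqr ger0_norm // invr_ge0 ltW.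
apply/rowP => l; rewrite mxE pcoord_from_sphere norm /scoord unsidxK.
by rewrite invrK -mulrA mulVf ?mulr1 ?gt_eqF.
Qed.

End PolyjoinSphere.

(* An alias hiding the filter-level unfolding of [{for x, continuous f}], so
   that the rules below chain with [apply:]. *)
Definition cont_at (X Y : topologicalType) (f : X -> Y) (x : X) : Prop :=
  {for x, continuous f}.

Section ContinuityAt.
Variables (R : realType) (X : topologicalType) (x : X).
Implicit Types (f g : X -> R).

Lemma eq_cont_at (Y : topologicalType) (f g : X -> Y) : f =1 g -> cont_at f x -> cont_at g x.
Proof. by move=> /funext ->. Qed.

Lemma cont_cst (c : R) : cont_at (fun _ : X => c) x.
Proof. exact: cst_continuous. Qed.

Lemma cont_add f g : cont_at f x -> cont_at g x ->
  cont_at (fun y => f y + g y) x.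
Proof. exact: continuousD. Qed.

Lemma cont_mul f g : cont_at f x -> cont_at g x ->
  cont_at (fun y => f y * g y) x.
Proof. exact: continuousM. Qed.

Lemma cont_opp f : cont_at f x -> cont_at (fun y => - f y) x.
Proof. exact: continuousN. Qed.

Lemma cont_inv f : f x != 0 -> cont_at f x -> cont_at (fun y => (f y)^-1) x.
Proof. exact: continuousV. Qed.

Lemma cont_norm f : cont_at f x -> cont_at (fun y => `|f y|) x.
Proof. by move=> hf; apply: (continuous_comp hf); apply: norm_continuous. Qed.

Lemma cont_sqrt f : cont_at f x -> cont_at (fun y => Num.sqrt (f y)) x.
Proof. by move=> hf; apply: (continuous_comp hf); apply: sqrt_continuous. Qed.

Lemma cont_sum (I : finType) (F : I -> X -> R) : (forall i, cont_at (F i) x) ->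
  cont_at (fun y => \sum_i F i y) x.
Proof.
move=> hF; elim: (index_enum I) => [|i r IH].
  by apply: (@eq_cont_at _ (fun _ => 0)) => [y|]; rewrite ?big_nil //; apply: cont_cst.
by apply: (@eq_cont_at _ (fun y => F i y + \sum_(j <- r) F j y)) => [y|]; rewrite ?big_cons //;
  apply: cont_add.
Qed.

Lemma cont_ppart f : cont_at f x -> cont_at (fun y => ppart (f y)) x.
Proof.
move=> hf; rewrite /ppart; apply: cont_mul; last exact: cont_cst.
exact: cont_add hf (cont_norm hf).
Qed.

Lemma cont_amin f g : cont_at f x -> cont_at g x ->
  cont_at (fun y => amin (f y) (g y)) x.
Proof.
move=> hf hg; rewrite /amin; apply: cont_mul; last exact: cont_cst.
apply: cont_add (cont_add hf hg) _.
exact/cont_opp/cont_norm/(cont_add hf)/cont_opp.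
Qed.

Lemma cont_bary p j f g : cont_at f x -> cont_at g x ->
  cont_at (fun y => bary p j (f y) (g y)) x.
Proof.
move=> hf hg; rewrite /bary; case: p; case_ord5 j => /=; try exact: cont_cst;
  by repeat first [ apply: cont_ppart | apply: cont_amin | apply: cont_add
                  | apply: cont_opp | exact: hf | exact: hg ].
Qed.

Lemma cont_mx m n (F : X -> 'M[R]_(m, n)) :
  (forall i j, cont_at (fun y => F y i j) x) -> cont_at F x.
Proof.
move=> hF; apply/cvg_mx_entourageP => A entA.
apply: filter_forall => i; apply: filter_forall => j.
have /cvg_app_entourageP /(_ A entA) : cont_at (fun y => F y i j) x := hF i j.
by rewrite near_map; apply: filterS => y /=; rewrite in_setE.
Qed.

End ContinuityAt.

Section PolyjoinSphereContinuity.
Variables (R : realType) (k d : nat) (kd : (k * 2)%N = d.+1) (s : {ffun 'I_k -> bool}).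

Lemma cont_pcoord i c (x : 'rV[R]_(k * 5)) : cont_at (fun y => pcoord y i c) x.
Proof.
by apply: cont_sum => j; apply: cont_mul; [exact: coord_continuous | exact: cont_cst].
Qed.

Lemma cont_to_sphere (x : 'rV[R]_(k * 5)) : realization R (polyjoin s) x ->
  cont_at (to_sphere kd) x.
Proof.
move=> rx; apply: cont_mx => i l.
apply: (@eq_cont_at _ _ _ (fun y => pcoord y (unsidx kd l).1 (unsidx kd l).2 /
                                   Num.sqrt (pnorm2 y))) => [y|]; first by rewrite mxE.
apply: cont_mul; first exact: cont_pcoord.
apply: cont_inv; first by rewrite gt_eqF // sqrtr_gt0 (pnorm2_gt0 rx).
by apply/cont_sqrt/cont_sum => i'; apply: cont_sum => c; apply: cont_mul; apply: cont_pcoord.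
Qed.

Lemma cont_from_sphere (z : 'rV[R]_d.+1) : sphere R d z -> cont_at (from_sphere kd s) z.
Proof.
move=> z1; apply: cont_mx => i u.
apply: (@eq_cont_at _ _ _ (fun y => bary (s (unbidx u).1) (unbidx u).2
    (scoord kd y (unbidx u).1 false) (scoord kd y (unbidx u).1 true) / bary_mass kd s y)) => [y|].
  by rewrite mxE.
apply: cont_mul; first by apply: cont_bary; exact: coord_continuous.
apply: cont_inv; first by rewrite gt_eqF // (bary_mass_gt0 kd s z1).
by apply: cont_sum => i'; apply: cont_sum => j; apply: cont_bary; exact: coord_continuous.
Qed.

Lemma polyjoin_flag_sphere : flag_sphere R d (polyjoin s).
Proof.
split; first exact: polyjoin_flag.
exists (to_sphere kd), (from_sphere kd s); split.
  split; [exact: to_sphere_sphere | exact: from_sphere_realization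
         | exact: to_sphereK | exact: from_sphereK].
by split; apply: continuous_in_subspaceT => x; rewrite in_setE;
  [exact: cont_to_sphere | exact: cont_from_sphere].
Qed.

End PolyjoinSphereContinuity.

Lemma not_comb_locally_determined_of_flag_spheres (R : realType)
    (T : complex -> Prop) (Lam : complex -> R) (b : int -> R) (d : nat) :
  (forall K, T K -> Lam K = fsum b K) -> b (-1) != 0 -> odd d ->
  (forall K, flag_sphere R d K -> T K) -> ~ comb_locally_determined T Lam.
Proof.
move=> HL b0 od HT [h [h_equiv Hh]].
pose k := d.+1./2; have kd : (k * 2 = d.+1)%N.
  by rewrite muln2 /k -[in RHS](odd_double_half d.+1) /= od.
have Tpj (s : {ffun 'I_k -> bool}) : T (polyjoin s) by apply/HT/(polyjoin_flag_sphere R kd).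
pose g L := h L - link_weight (fun k => b k) L.
have g_link (s s' : {ffun 'I_k -> bool}) i a a' :
    (forall i0, i0 != i -> s i0 = s' i0) -> a \in polyV (s i) -> a' \in polyV (s' i) ->
    g (link (polyjoin s) (bidx i a)) = g (link (polyjoin s') (bidx i a')).
  move=> ss' av av'; have e := polyjoin_link_equiv ss' av av'.
  rewrite /g (link_weight_comb_equiv _ e) (h_equiv _ _ _ _ e) //.
    by exists (polyjoin s), (bidx i a); rewrite polyjoin_Vert.
  by exists (polyjoin s'), (bidx i a'); rewrite polyjoin_Vert.
have sum_g (s : {ffun 'I_k -> bool}) :
    \sum_(v in Vert (polyjoin s)) g (link (polyjoin s) v) = b (-1).
  by rewrite sumrB -(Hh _ (Tpj s)) (HL _ (Tpj s)) fsum_link_weight addrK.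
move/eqP: (weighted_sum_polyjoin_link g_link); apply/negP.
under eq_bigr => s _ do rewrite sum_g.
by rewrite -big_distrl /= sum_join_weight mul1r.
Qed.

Theorem theorem1p2 (R : realType) (T : complex -> Prop) (Lam : complex -> R)
    (b : int -> R) :
  (forall K, T K -> Lam K = fsum b K) ->
  [/\ (exists c : int, c != 0 /\ forall K, T K -> euler K = c) ->
        comb_locally_determined T Lam,
      b (-1) = 0 -> comb_locally_determined T Lam &
      (b (-1) != 0 ->
       (exists d : nat, odd d /\ (3 <= d)%N /\
          forall K, flag_sphere R d K -> T K) ->
       ~ comb_locally_determined T Lam)].
Proof.
move=> HL; split.
- by case=> c [c0 Hc]; apply: comb_locally_determined_of_euler_const HL c0 Hc.
- exact: comb_locally_determined_of_fsum_bN1_eq0 HL.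
- by move=> b0 [d [od [_ HT]]]; apply: not_comb_locally_determined_of_flag_spheres HL b0 od HT.
Qed.
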